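(* Let $q$ be a prime power and let $\mathcal{F}=(\mathcal{F}_1,\ldots,\mathcal{F}_r)$ be a flag of type $(t_1,\ldots,t_r)$ on $\mathbb{F}_{q^n}$. Assume $m$ is a divisor of $n$ with $m=t_i$ for some $i\in\{1,\ldots,r\}$, and let $\beta\in\mathbb{F}_{q^n}^*$ be such that $\mathbb{F}_{q^m}^*\subseteq\langle\beta\rangle$. Then: (1) $\frac{|\beta|}{q^m-1}$ divides $|\mathrm{Orb}_\beta(\mathcal{F})|$; (2) $|\mathrm{Orb}_\beta(\mathcal{F})|=\frac{|\beta|}{q^m-1}$ if and only if every subspace $\mathcal{F}_j$ ($1\le j\le r$) is a vector space over $\mathbb{F}_{q^m}$; in particular, if this equality holds, then $t_1=m$.
   Context: $\mathbb{F}_{q^n}$ is regarded as an $\mathbb{F}_q$-vector space. A flag of type $(t_1,\ldots,t_r)$ on $\mathbb{F}_{q^n}$ is a sequence $(\mathcal{F}_1,\ldots,\mathcal{F}_r)$ of $\mathbb{F}_q$-subspaces with $\{0\}\subsetneq\mathcal{F}_1\subsetneq\cdots\subsetneq\mathcal{F}_r\subsetneq\mathbb{F}_{q^n}$ and $\dim_{\mathbb{F}_q}\mathcal{F}_i=t_i$. For $\beta\in\mathbb{F}_{q^n}^*$, $|\beta|$ is its multiplicative order, $\mathcal{F}\beta=(\mathcal{F}_1\beta,\ldots,\mathcal{F}_r\beta)$ where $\mathcal{U}\beta=\{u\beta:u\in\mathcal{U}\}$, and $\mathrm{Orb}_\beta(\mathcal{F})=\{\mathcal{F}\beta^j:0\le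 j\le|\beta|-1\}$. *)

(* F_{q^n} is modelled as a finite field L with #|L| = q^n. *)
From mathcomp Require Import all_boot all_order all_algebra all_fingroup all_field.
Set Implicit Arguments. Unset Strict Implicit. Unset Printing Implicit Defensive.
Import GRing.Theory.
Local Open Scope ring_scope.

Definition prime_power (q : nat) : Prop :=
  exists p k : nat, [/\ prime p, (0 < k)%N & q = (p ^ k)%N].

(* the subfield F_k = {x | x^k = x} of L (k a power of the characteristic) *)
Definition Fsub (L : finFieldType) (k : nat) : {set L} :=
  [set x : L | x ^+ k == x].

Definition is_subspace_over (L : finFieldType) (K U : {set L}) : Prop :=
  [/\ (0 : L) \in U,
      forall x y, x \in U -> y \in U -> x + y \in U
    & forall a x, a \in K -> x \in U -> a * x \in U].

Definition Fq_subspace_dim (L : finFieldType) (q : nat) (U : {set L}) (t : nat) : Prop :=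
  is_subspace_over (Fsub L q) U /\ #|U| = (q ^ t)%N.

Definition is_flag (L : finFieldType) (q : nat) (Fl : seq {set L}) (t : seq nat) : Prop :=
  [/\ size Fl = size t /\ (0 < size Fl)%N,
      forall i, (i < size Fl)%N -> Fq_subspace_dim q (nth set0 Fl i) (nth 0%N t i),
      [set (0 : L)] \proper nth set0 Fl 0,
      forall i, (i.+1 < size Fl)%N -> nth set0 Fl i \proper nth set0 Fl i.+1
    & nth set0 Fl (size Fl).-1 \proper [set: L]].

Definition shift_set (L : finFieldType) (U : {set L}) (b : L) : {set L} :=
  [set u * b | u in U].

Definition shift_flag (L : finFieldType) (Fl : seq {set L}) (b : L) : seq {set L} :=
  map (fun U => shift_set U b) Fl.

Definition orbit_flag (L : finFieldType) (b : {unit L}) (Fl : seq {set L}) : seq (seq {set L}) :=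
  undup [seq shift_flag Fl ((val b) ^+ j) | j <- iota 0 #[b]%g].

(* The orbit of the flag under <beta> has size |<beta> : S|, where S is the stabiliser
   of the flag in <beta>.  An element of S permutes the nonzero vectors of F_i freely,
   and |F_i| = q^m, so its order divides q^m - 1: S lies in F_{q^m}^*, which is cyclic
   of order q^m - 1 and contained in <beta>.  Hence |<beta> : F_{q^m}^*| = |beta|/(q^m - 1)
   divides the orbit size, with equality iff F_{q^m}^* <= S, i.e. iff every F_j is closed
   under multiplication by F_{q^m}.  In that case q^m - 1 divides |F_1| - 1, and
   1 < |F_1| <= |F_i| = q^m forces |F_1| = q^m. *)

From mathcomp Require Import all_boot all_order all_algebra all_fingroup all_field.
From mathcomp Require Import all_solvable zify.

Set Implicit Arguments.
Unset Strict Implicit.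
Unset Printing Implicit Defensive.
Import GRing.Theory.
Local Open Scope ring_scope.

Lemma dvdn_expn_sub1 (q m n : nat) : (m %| n)%N -> (q ^ m - 1 %| q ^ n - 1)%N.
Proof.
case/dvdnP=> k ->; rewrite mulnC expnM; case: (q ^ m)%N => [|x].
  by case: k => [|k]; rewrite ?expn0 ?exp0n.
have xk_gt0 : (0 < x.+1 ^ k)%N by rewrite expn_gt0.
rewrite subn1 /= -(eqn_mod_dvd _ xk_gt0) -modnXm -addn1 modnDl modnXm.
by rewrite exp1n.
Qed.

Lemma prime_power_gt1 (q : nat) : prime_power q -> (1 < q)%N.
Proof. by case=> p [e [p_pr e_gt0 ->]]; rewrite -(exp1n e) ltn_exp2r ?prime_gt1. Qed.

Lemma eqn_indexg_subset (gT : finGroupType) (G H K : {group gT}) :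
  (H \subset G)%g -> (K \subset H)%g -> (#|G : K| == #|G : H|)%g = (H \subset K)%g.
Proof.
move=> sHG sKH; rewrite -(Lagrange_index sHG sKH) -indexg_eq1.
by rewrite -{2}(muln1 #|G : H|%g) eqn_pmul2l ?indexg_gt0.
Qed.

Section Shifts.
Context {L : finFieldType}.
Implicit Types (U : {set L}) (Fl : seq {set L}) (a : L).

Lemma shift_setM U a1 a2 : shift_set (shift_set U a1) a2 = shift_set U (a1 * a2).
Proof.
apply/setP=> z; apply/imsetP/imsetP.
  by case=> w /imsetP[u uU ->] ->; exists u => //; rewrite mulrA.
by case=> u uU ->; exists (u * a1); [apply/imsetP; exists u | rewrite mulrA].
Qed.

Lemma shift_set1 U : shift_set U 1 = U.
Proof.
apply/setP=> z; apply/imsetP/idP; first by case=> u uU ->; rewrite mulr1.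
by move=> zU; exists z; rewrite ?mulr1.
Qed.

Lemma shift_set_fixedX U a k : shift_set U a = U -> shift_set U (a ^+ k) = U.
Proof.
move=> Ua; elim: k => [|k IHk]; first by rewrite expr0 shift_set1.
by rewrite exprSr -shift_setM IHk.
Qed.

Lemma shift_set_fixed U a : a != 0 -> shift_set U a \subset U -> shift_set U a = U.
Proof.
move=> a0 sUaU; apply/eqP; rewrite eqEcard sUaU card_imset //=.
exact: mulIf.
Qed.

Lemma shift_flagM Fl a1 a2 :
  shift_flag (shift_flag Fl a1) a2 = shift_flag Fl (a1 * a2).
Proof. by rewrite /shift_flag -map_comp; apply: eq_map => U /=; rewrite shift_setM. Qed.

Lemma shift_flag1 Fl : shift_flag Fl 1 = Fl.
Proof. by rewrite /shift_flag (eq_map (@shift_set1)) map_id. Qed.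

Lemma shift_flag_fixedP Fl a :
  shift_flag Fl a = Fl <->
  (forall j, (j < size Fl)%N -> shift_set (nth set0 Fl j) a = nth set0 Fl j).
Proof.
split=> [Fla j jF | FjA]; first by rewrite -{2}Fla (nth_map set0).
apply: (@eq_from_nth _ set0); rewrite size_map // => j jF.
by rewrite (nth_map set0) // FjA.
Qed.

End Shifts.

Section ShiftAction.
Context {L : finFieldType} {k : nat}.

(* Actions need a finite carrier, so flags of length k are acted on as k-tuples. *)
Definition shift_tuple (T : k.-tuple {set L}) (u : {unit L}) : k.-tuple {set L} :=
  [tuple of shift_flag T (val u)].

Lemma shift_tuple1 : shift_tuple^~ 1%g =1 id.
Proof. by move=> T; apply: val_inj; rewrite /= shift_flag1. Qed.

Lemma shift_tupleM T : act_morph shift_tuple T.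
Proof. by move=> u v; apply: val_inj; rewrite /= shift_flagM. Qed.

Definition shift_action := TotalAction shift_tuple1 shift_tupleM.

End ShiftAction.

Section FlagOrbit.
Local Open Scope group_scope.
Context {L : finFieldType}.
Implicit Types (Fl : seq {set L}) (b u : {unit L}).

Lemma astab1_shift Fl u :
  (u \in 'C[in_tuple Fl | shift_action]) = (shift_flag Fl (val u) == Fl).
Proof. by apply/astab1P/eqP => [/(congr1 val) | Flu]; last apply: val_inj. Qed.

Lemma size_orbit_flag b Fl :
  size (orbit_flag b Fl) = #|<[b]> : 'C_<[b]>[in_tuple Fl | shift_action]|.
Proof.
rewrite -card_orbit.
set s := [seq shift_action (in_tuple Fl) (b ^+ j) | j <- iota 0 #[b]].
have -> : orbit_flag b Fl = map val (undup s).
  rewrite -undup_map_inj; last exact: val_inj.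
  by rewrite -map_comp; congr undup; apply: eq_map => j /=; rewrite FinRing.val_unitX.
rewrite size_map -(card_uniqP (undup_uniq s)) (eq_card (mem_undup s)).
apply: eq_card => T; apply/mapP/imsetP => [[j _ ->] | [u /cyclePmin[j jb ->] ->]].
  by exists (b ^+ j); rewrite ?mem_cycle.
by exists j; rewrite // mem_iota.
Qed.

End FlagOrbit.

Section SubfieldUnits.
Context {L : finFieldType}.
Implicit Types (K U : {set L}) (Fl : seq {set L}) (u y : {unit L}).

Lemma order_dvdn_shift_fixed U u :
  0 \in U -> shift_set U (val u) = U -> (#[u]%g %| #|U| - 1)%N.
Proof.
move=> U0 Uu; have u0 : val u != 0 by rewrite -unitfE (valP u).
set B := U :\ 0.
have cardU : #|U| = #|B|.+1 by rewrite (cardsD1 0 U) U0.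
have Bu : shift_set B (val u) = B.
  apply: shift_set_fixed => //; apply/subsetP => _ /imsetP[x /setD1P[x0 xU] ->].
  by rewrite !inE mulf_neq0 //= -Uu; apply: imset_f.
(* u permutes B, so the product of B is unchanged by multiplying every factor by u. *)
have prodB : \prod_(x in B) x = \prod_(x in B) x * val u ^+ #|B|.
  rewrite -[in LHS]Bu big_imset /=; last by move=> x z _ _; apply: mulIf.
  by rewrite big_split prodr_const.
have uB : val u ^+ #|B| = 1.
  have prodB0 : \prod_(x in B) x != 0 by apply/prodf_neq0 => x /setD1P[].
  by apply: (mulfI prodB0); rewrite mulr1 -prodB.
by rewrite cardU subn1 order_dvdn; apply/eqP/val_inj; rewrite /= FinRing.val_unitX uB.
Qed.

Lemma card_shift_fixed_eq U u (Q : nat) :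
    0 \in U -> shift_set U (val u) = U -> #[u]%g = (Q - 1)%N -> (1 < #|U| <= Q)%N ->
  #|U| = Q.
Proof.
move=> U0 Uu ou /andP[U_gt1 U_le]; have := order_dvdn_shift_fixed U0 Uu.
by rewrite ou => /dvdn_leq; rewrite subn_gt0 => /(_ U_gt1); lia.
Qed.

Lemma mem_units_cycle u y : (u \in <[y]>%g) = (#[u]%g %| #[y]%g)%N.
Proof.
have cycL := field_unit_group_cyclic [set: {unit L}]%G.
by rewrite -cycle_subG -(cardSg_cyclic cycL) ?subsetT.
Qed.

Lemma astab_shift_sub_cycle Fl i y :
    (i < size Fl)%N -> 0 \in nth set0 Fl i -> #[y]%g = (#|nth set0 Fl i| - 1)%N ->
  ('C[in_tuple Fl | shift_action] \subset <[y]>)%g.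
Proof.
move=> iF Fi0 oy; apply/subsetP => u; rewrite astab1_shift mem_units_cycle oy.
by move/eqP/shift_flag_fixedP/(_ i iF); apply: order_dvdn_shift_fixed.
Qed.

Lemma Fsub_units_cycle (Q : nat) : (0 < Q)%N -> (Q - 1 %| #|L| - 1)%N ->
  exists y, #[y]%g = (Q - 1)%N /\ forall u, (val u \in Fsub L Q) = (u \in <[y]>%g).
Proof.
move=> Q_gt0 /dvdnP[d Ld].
have [g gen_g] := cyclicP (field_unit_group_cyclic [set: {unit L}]%G).
have og : #[g]%g = (#|L| - 1)%N by rewrite orderE -gen_g /= card_finField_unit subn1.
have d_gt0 : (0 < d)%N by move: (order_gt0 g); rewrite og Ld muln_gt0 => /andP[].
have oy : #[g ^+ d]%g = (Q - 1)%N by rewrite orderXdiv og Ld ?dvdn_mulr ?mulKn.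
exists (g ^+ d)%g; split=> // u; have u0 : val u != 0 by rewrite -unitfE (valP u).
rewrite mem_units_cycle oy order_dvdn inE -val_eqE /= FinRing.val_unitX.
by rewrite -[in LHS](prednK Q_gt0) exprSr -[X in _ == X]mul1r (inj_eq (mulIf u0)) subn1.
Qed.

Section FsubGenerator.
Variables (Q : nat) (y : {unit L}).
Hypothesis FsubE : forall u, (val u \in Fsub L Q) = (u \in <[y]>%g).

Lemma subspace_over_Fsub_shift K U :
  is_subspace_over K U -> is_subspace_over (Fsub L Q) U <-> shift_set U (val y) = U.
Proof.
move=> [U0 UD _]; split=> [[_ _ UM] | Uy].
  apply: shift_set_fixed; first by rewrite -unitfE (valP y).
  by apply/subsetP => _ /imsetP[x xU ->]; rewrite mulrC UM // FsubE cycle_id.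
split=> // a x aQ xU; have [-> | a0] := eqVneq a 0; first by rewrite mul0r.
have a_unit : a \is a GRing.unit by rewrite unitfE.
have /cycleP[k ua] : FinRing.Unit a_unit \in <[y]>%g by rewrite -FsubE.
have -> : a = val y ^+ k by rewrite -FinRing.val_unitX -ua.
by rewrite mulrC -(shift_set_fixedX k Uy); apply: imset_f.
Qed.

Lemma subspaces_over_Fsub_astab K Fl :
    (forall j, (j < size Fl)%N -> is_subspace_over K (nth set0 Fl j)) ->
  (forall j, (j < size Fl)%N -> is_subspace_over (Fsub L Q) (nth set0 Fl j)) <->
  (y \in 'C[in_tuple Fl | shift_action])%g.
Proof.
move=> FK; rewrite astab1_shift; split=> [FQ | /eqP/shift_flag_fixedP Fy j jF].
  by apply/eqP/shift_flag_fixedP => j jF; apply/(subspace_over_Fsub_shift (FK j jF))/FQ.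
exact/(subspace_over_Fsub_shift (FK j jF))/Fy.
Qed.

End FsubGenerator.

End SubfieldUnits.

Lemma flag_card_nth0 (L : finFieldType) (q : nat) (Fl : seq {set L}) (t : seq nat) i :
  is_flag q Fl t -> (i < size Fl)%N -> (1 < #|nth set0 Fl 0| <= #|nth set0 Fl i|)%N.
Proof.
case=> _ _ F0 Fchain _ iF; have := proper_card F0; rewrite cards1 => -> /=.
apply: subset_leq_card; elim: i iF => [|i IHi] iF; first exact: subxx.
exact: subset_trans (IHi (ltnW iF)) (proper_sub (Fchain i iF)).
Qed.

Unset Implicit Arguments.

Theorem proposition3p10 (L : finFieldType) (q n m : nat) (Fl : seq {set L}) (t : seq nat)
    (b : {unit L}) :
  prime_power q ->
  #|L| = (q ^ n)%N ->
  is_flag q Fl t ->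
  (m %| n)%N ->
  (exists2 i, (i < size t)%N & nth 0%N t i = m) ->
  (forall x : {unit L}, (val x) ^+ (q ^ m) = val x -> x \in <[b]>%g) ->
  let orb := size (orbit_flag b Fl) in
  [/\ (#[b]%g %/ (q ^ m - 1) %| orb)%N,
      orb = (#[b]%g %/ (q ^ m - 1))%N <->
        (forall j, (j < size Fl)%N -> is_subspace_over (Fsub L (q ^ m)) (nth set0 Fl j))
    & orb = (#[b]%g %/ (q ^ m - 1))%N -> nth 0%N t 0 = m].
Proof.
move=> /prime_power_gt1 q_gt1 cardL flagF dvd_mn [i it tiE] Fsub_b orb.
have [[sizeFt sizeF_gt0] Fdim _ _ _] := flagF.
have iF : (i < size Fl)%N by rewrite sizeFt.
have FK j : (j < size Fl)%N -> is_subspace_over (Fsub L q) (nth set0 Fl j) by case/Fdim.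
set Q := (q ^ m)%N in Fsub_b *.
have [[Fi0 _ _] cardFi] := Fdim i iF; rewrite tiE -/Q in cardFi.
have [y [oy FsubE]] : exists y : {unit L}, #[y]%g = (Q - 1)%N /\
    forall u : {unit L}, (val u \in Fsub L Q) = (u \in <[y]>%g).
  by apply: Fsub_units_cycle; rewrite ?expn_gt0 ?(ltnW q_gt1) // cardL dvdn_expn_sub1.
have y_b : (<[y]> \subset <[b]>)%g.
  by rewrite cycle_subG Fsub_b //; apply/eqP; have := FsubE y; rewrite cycle_id inE.
have S_y : ('C_<[b]>[in_tuple Fl | shift_action] \subset <[y]>)%g.
  by apply: subset_trans (subsetIr _ _) (astab_shift_sub_cycle iF Fi0 _); rewrite cardFi.
have NQ : (#[b]%g %/ (Q - 1))%N = #|<[b]> : <[y]>|%g by rewrite -oy !orderE divgS.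
have orbE : orb = (#[b]%g %/ (Q - 1))%N <->
    (forall j, (j < size Fl)%N -> is_subspace_over (Fsub L Q) (nth set0 Fl j)).
  rewrite /orb size_orbit_flag NQ (rwP eqP) eqn_indexg_subset // cycle_subG in_setI.
  by rewrite (subsetP y_b _ (cycle_id y)); exact: iff_sym (subspaces_over_Fsub_astab FsubE FK).
split=> //; first by rewrite /orb size_orbit_flag NQ indexgS.
move/orbE/(_ 0%N sizeF_gt0)/(subspace_over_Fsub_shift FsubE (FK 0%N sizeF_gt0)) => F1y.
have [[F1_0 _ _] cardF1] := Fdim 0%N sizeF_gt0.
apply/eqP; rewrite -(eqn_exp2l _ _ q_gt1) -cardF1 -/Q (card_shift_fixed_eq F1_0 F1y oy) //.
by rewrite -cardFi (flag_card_nth0 flagF iF).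
Qed.
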